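(* Let $G$ be a finite cyclic group and let $f$ be an automorphism of $\mathcal{P}_{0}(G)$ with trivial pullback. Then $f$ is the identity.
   Context: For an additively written finite abelian group $G$, $\mathcal{P}_{0}(G)$ is the monoid of all subsets of $G$ containing $0$, with setwise addition and identity $\{0\}$. An automorphism $f$ of $\mathcal{P}_0(G)$ has trivial pullback if $f(\{0,a\})=\{0,a\}$ for all $a\in G$. *)

(* The finite group is a finGroupType written multiplicatively
   (identity 1, set product A * B); this is the paper's additive group with
   0 ~ 1 and A + B ~ A * B. *)
From mathcomp Require Import all_boot all_fingroup all_solvable.
Set Implicit Arguments. Unset Strict Implicit. Unset Printing Implicit Defensive.
Local Open Scope group_scope.

Definition P0 (gT : finGroupType) : {set {set gT}} := [set A : {set gT} | 1 \in A].

Definition P0_automorphism (gT : finGroupType) (f : {set gT} -> {set gT}) : Prop :=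
  [/\ {in P0 gT, forall A, f A \in P0 gT},
      {in P0 gT &, injective f},
      (forall B, B \in P0 gT -> exists2 A, A \in P0 gT & f A = B),
      {in P0 gT &, forall A B, f (A * B) = f A * f B}
    & f [set 1] = [set 1]].

Definition trivial_pullback (gT : finGroupType) (f : {set gT} -> {set gT}) : Prop :=
  forall a : gT, f [set 1; a] = [set 1; a].

(* Let S be the right stabiliser of A in G.  Since f is multiplicative and fixes
   every {1, c}, we get f(A) {1, c} = f(A {1, c}); this is f(A) when c is in S,
   and A {1, c} when c is not in S, by downward induction on |A| because
   A {1, c} is then strictly larger than A.  These relations force f(A) = A
   unless A is the complement of a coset z S with z not in S.  Products of sets
   {1, a} are fixed by f; every subgroup is such a product, and when G = <g>
   is cyclic, so is the complement of z S: if d is the order of g S in G / S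
   and z S = g^r S with 0 < r < d, then it is {1, g}^(r-1) {1, g^-1}^(d-r-1) S. *)
From mathcomp Require Import all_boot all_fingroup all_solvable.
From mathcomp Require Import zify.
Set Implicit Arguments. Unset Strict Implicit. Unset Printing Implicit Defensive.

(* The residues k with k != r (mod d) are exactly the residues i - l
   with 0 <= i < r and 0 <= l < d - r; this is stated as i = k + l to avoid
   truncated subtraction. *)
Lemma modn_neq_sub_range d r k : 0 < r -> r < d ->
  k %% d != r <-> exists2 i, i < r & exists2 l, l < d - r & i = k + l %[mod d].
Proof.
move=> r_gt0 lt_rd; split => [neq_kr | [i lt_ir [l lt_l]]].
  have lt_kd : k %% d < d by rewrite ltn_pmod // (ltn_trans r_gt0).
  case: (ltngtP (k %% d) r) neq_kr => // [lt_kr | lt_rk] _.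
    by exists (k %% d) => //; exists 0; rewrite ?subn_gt0 // addn0 modn_mod.
  exists 0 => //; exists (d - k %% d); first lia.
  by rewrite -modnDml subnKC ?modnn ?mod0n // ltnW.
move=> eq_il; apply/eqP => eq_kr; move: eq_il.
by rewrite -modnDml eq_kr !modn_small //; lia.
Qed.

Local Open Scope group_scope.

Section PairProducts.

Variable gT : finGroupType.
Implicit Types (A B X : {set gT}) (S : {group gT}).

Lemma mulg_pair A c : A * [set 1; c] = A :|: A :* c.
Proof. by rewrite mulgU mulg1 -rcosetE. Qed.

Lemma subset_mulg_pair A c : A \subset A * [set 1; c].
Proof. by rewrite mulg_pair subsetUl. Qed.

Lemma astabsR_mulg_pair A c : (c \in 'N(A | 'R)) = (A * [set 1; c] == A).
Proof.
rewrite mulg_pair eqEsubset subsetUl andbT subUset subxx /= !inE /=.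
apply/subsetP/subsetP => sAc x => [/rcosetP[a Aa ->] | Ax].
  by have := sAc a Aa; rewrite inE.
by rewrite inE sAc // mem_rcoset mulgK.
Qed.

Lemma setC_lcoset_eq S X z :
    [acts S, on X | 'R] -> z \notin X -> {in ~: S, forall c, z \in X * [set 1; c]} ->
  X = ~: (z *: S).
Proof.
move=> nXS Xz zXS; apply/setP => x.
rewrite !inE mem_lcoset -[_ \in S]groupV invMg invgK.
have [xzS | xzNS] /= := boolP (x^-1 * z \in S).
  apply/negbTE; apply: contra Xz => Xx.
  by rewrite -(mulKVg x z) (astabs_act _ (subsetP nXS _ xzS)).
have /mulsgP[a c Xa] : z \in X * [set 1; x^-1 * z] by rewrite zXS ?inE.
rewrite !inE => /orP[] /eqP -> => [| eq_z].
  by rewrite mulg1 => eq_za; rewrite eq_za Xa in Xz.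
by have <- : a = x by apply: (mulIg (x^-1 * z)); rewrite -eq_z mulKVg.
Qed.

Lemma mulg_pair_setC_lcoset S y c : c \notin S -> ~: (y *: S) * [set 1; c] = setT.
Proof.
move=> cNS; apply/setP => w; rewrite mulg_pair !inE mem_rcoset !mem_lcoset.
case: (boolP (y^-1 * w \in S)) => //= ywS.
by rewrite inE mem_lcoset mulgA (groupMl _ ywS) groupV.
Qed.

Lemma setC_lcoset_of_mulg_pair A B :
    A != setT -> B != A ->
    {in 'N(A | 'R), forall c, B * [set 1; c] = B} ->
    {in ~: 'N(A | 'R), forall c, B * [set 1; c] = A * [set 1; c]} ->
  exists z, A = ~: (z *: 'N(A | 'R)).
Proof.
set S := 'N(A | 'R) => ATNT neqBA BS BNS.
have nAS : [acts S, on A | 'R] by [].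
have nBS : [acts S, on B | 'R].
  by apply/subsetP => c Sc; rewrite astabsR_mulg_pair BS.
move: neqBA; rewrite eqEsubset => /nandP[/subsetPn[y By yNA] | /subsetPn[y Ay yNB]].
  exists y; apply: setC_lcoset_eq nAS yNA _ => c cNS.
  by rewrite -BNS // (subsetP (subset_mulg_pair B c)).
have defB : B = ~: (y *: S).
  apply: setC_lcoset_eq nBS yNB _ => c cNS.
  by rewrite BNS // (subsetP (subset_mulg_pair A c)).
have /subsetPn[z _ zNA] : ~~ ([set: gT] \subset A) by rewrite subTset.
exists z; apply: setC_lcoset_eq nAS zNA _ => c cNS.
by rewrite -BNS // defB mulg_pair_setC_lcoset ?in_setT // -in_setC.
Qed.

Definition pair_prod (s : seq gT) : {set gT} := \prod_(a <- s) [set 1; a].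

Lemma pair_prod_cat s t : pair_prod (s ++ t) = pair_prod s * pair_prod t.
Proof. exact: big_cat. Qed.

Lemma mem1_pair_prod s : 1 \in pair_prod s.
Proof.
apply: (big_ind (fun X => 1 \in X)) => [|X Y X1 Y1|a _]; first exact: set11.
  by rewrite -(mulg1 1) mem_mulg.
by rewrite set21.
Qed.

Lemma mem_pair_prod s : {subset s <= pair_prod s}.
Proof.
elim: s => // b s IHs a; rewrite inE /pair_prod big_cons => /predU1P[-> | /IHs sa].
  by have := mem_mulg (set22 1 b) (mem1_pair_prod s); rewrite mulg1.
by have := mem_mulg (set21 1 b) sa; rewrite mul1g.
Qed.

Lemma group_pair_prod (G : {group gT}) : pair_prod (enum G) = G.
Proof.
apply/eqP; rewrite eqEsubset; apply/andP; split.
  rewrite /pair_prod big_seq.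
  apply: (big_ind (fun X => X \subset G)) => [|X Y|a]; first exact: sub1G.
    exact: mul_subG.
  by rewrite mem_enum subUset !sub1set group1.
by apply/subsetP => x Gx; rewrite mem_pair_prod ?mem_enum.
Qed.

Lemma pair_prod_nseqP a n x :
  reflect (exists2 i, i <= n & x = a ^+ i) (x \in pair_prod (nseq n a)).
Proof.
elim: n x => [|n IHn] x; rewrite /pair_prod /= ?big_nil ?big_cons.
  by apply: (iffP set1P) => [-> | [i]]; [exists 0 | rewrite leqn0 => /eqP -> ->].
apply: (iffP mulsgP) => [[u v /set2P[] -> /IHn[i le_in ->] ->] | [[|i] le_in ->]].
- by exists i; rewrite ?mul1g // leqW.
- by exists i.+1; rewrite ?expgS.
- by exists 1 (a ^+ 0); rewrite ?mul1g ?set21 //; apply/IHn; exists 0.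
- by exists a (a ^+ i); rewrite ?expgS ?set22 //; apply/IHn; exists i.
Qed.

Lemma mem_lcoset_cycle S g i l k : g \in 'N(S) ->
  (g ^+ k \in (g ^+ i * g^-1 ^+ l) *: S) = (i == k + l %[mod #[coset S g]]).
Proof.
move=> nSg; have nSgX m : g ^+ m \in 'N(S) := groupX m nSg.
rewrite -norm_rlcoset ?groupM ?groupX ?groupV //.
rewrite -(sameP eqP (rcoset_kercosetP _ _)) ?groupM ?groupX ?groupV //.
rewrite expgVn morphM ?morphV ?morphX ?groupV //=.
set q := coset S g; rewrite -(inj_eq (mulIg (q ^+ l))) mulgKV -expgD.
by rewrite eq_expg_mod_order eq_sym.
Qed.

Lemma cyclic_setC_lcoset_pair_prod S z :
  cyclic [set: gT] -> z \notin S -> exists s, ~: (z *: S) = pair_prod s.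
Proof.
case/cyclicP => g defG zNS.
have gen x : exists k, x = g ^+ k by apply/cycleP; rewrite -defG inE.
have nSg : g \in 'N(S).
  by rewrite (subsetP (sub_abelian_norm _ (subsetT S))) ?inE // defG cycle_abelian.
set d := #[coset S g].
have memS k j : (g ^+ k \in g ^+ j *: S) = (j == k %[mod d]).
  by rewrite -[g ^+ j]mulg1 -(expg0 g^-1) mem_lcoset_cycle ?addn0.
have [j defz] := gen z; set r := j %% d.
have lt_rd : r < d by rewrite ltn_pmod ?order_gt0.
have r_gt0 : 0 < r.
  by move: zNS; rewrite -(lcoset1 S) -(expg0 g) defz memS mod0n lt0n eq_sym.
exists (nseq r.-1 g ++ nseq (d - r).-1 g^-1 ++ enum S).
rewrite !pair_prod_cat group_pair_prod mulgA; apply/setP => x; have [k ->] := gen x.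
rewrite inE defz memS eq_sym.
apply/idP/idP => [/(modn_neq_sub_range _ r_gt0 lt_rd)[i lt_ir [l lt_l eq_i]] | ].
  rewrite -(mulKVg (g ^+ i * g^-1 ^+ l) (g ^+ k)) mem_mulg ?mem_mulg //.
  - by apply/pair_prod_nseqP; exists i => //; lia.
  - by apply/pair_prod_nseqP; exists l => //; lia.
  by rewrite -mem_lcoset mem_lcoset_cycle //; apply/eqP.
case/mulsgP => _ s /mulsgP[_ _ /pair_prod_nseqP[i le_i ->] /pair_prod_nseqP[l le_l ->] ->]
  Ss eq_k.
apply/(modn_neq_sub_range _ r_gt0 lt_rd).
exists i; first lia. exists l; first lia.
by apply/eqP; rewrite -(mem_lcoset_cycle i l k nSg) eq_k mem_lcoset mulKg.
Qed.

End PairProducts.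

Section FixedPoints.

Variables (gT : finGroupType) (f : {set gT} -> {set gT}).
Hypothesis fM : {in P0 gT &, {morph f : A B / A * B}}.
Hypothesis f_pair : trivial_pullback f.

Lemma P0_pair (c : gT) : [set 1; c] \in P0 gT.
Proof. by rewrite inE set21. Qed.

Lemma pair_prod_fixed s : f (pair_prod s) = pair_prod s.
Proof.
elim: s => [|a s IHs]; first by have := f_pair 1; rewrite /pair_prod big_nil setUid.
have P0s : pair_prod s \in P0 gT by rewrite inE mem1_pair_prod.
by rewrite /pair_prod big_cons -/(pair_prod s) fM ?P0_pair // f_pair IHs.
Qed.

Hypothesis cycT : cyclic [set: gT].

Lemma fixed_of_proper_supersets (A : {set gT}) :
  1 \in A -> {in P0 gT, forall X : {set gT}, A \proper X -> f X = X} -> f A = A.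
Proof.
move=> A1 fixA; have [-> | ATNT] := eqVneq A setT.
  by rewrite -(group_pair_prod [set: gT]%G) pair_prod_fixed.
apply/eqP; apply: contraT => neqfA.
have P0A : A \in P0 gT by rewrite inE.
have [z defA] : exists z, A = ~: (z *: 'N(A | 'R)).
  apply: setC_lcoset_of_mulg_pair ATNT neqfA _ _ => c.
    rewrite astabsR_mulg_pair => /eqP AcA.
    by rewrite -{1}(f_pair c) -(fM P0A (P0_pair c)) AcA.
  rewrite inE astabsR_mulg_pair => AcNA; rewrite -{1}(f_pair c) -(fM P0A (P0_pair c)).
  apply: fixA; first by rewrite inE (subsetP (subset_mulg_pair A c)).
  by rewrite properEneq eq_sym AcNA subset_mulg_pair.
have zNS : z \notin 'N(A | 'R) by move: A1; rewrite {1}defA inE mem_lcoset mulg1 groupV.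
have [s defC] := cyclic_setC_lcoset_pair_prod cycT zNS.
by rewrite defA defC pair_prod_fixed eqxx in neqfA.
Qed.

End FixedPoints.

Theorem corollary3p4 (gT : finGroupType) (f : {set gT} -> {set gT}) :
  cyclic [set: gT] -> P0_automorphism f -> trivial_pullback f ->
  {in P0 gT, forall A, f A = A}.
Proof.
move=> cycT [_ _ _ fM _] f_pair A; rewrite inE => A1.
have [n] := ubnP #|~: A|; elim: n A A1 => // n IHn A A1 ltAn.
apply: fixed_of_proper_supersets => // X; rewrite inE => X1 ltAX.
have ltXA : #|~: X| < #|~: A| by rewrite proper_card ?properC.
exact: IHn X1 (leq_trans ltXA ltAn).
Qed.
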